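(* Consider (1+1) GP-single applied to MO-ORDER, and (1+1) GP-single applied to MO-MAJORITY, each started with the empty tree as initial solution. In both cases the expected optimization time is $\Omega(n\log n)$.
   Context: Fix an integer $n\ge 1$ and real weights $w_1\ge w_2\ge\dots\ge w_n>0$. The terminal set is $T=\{x_1,\bar x_1,\dots,x_n,\bar x_n\}$ ($\bar x_i$ is the complement of $x_i$; $x_i$ is called positive). A syntax tree is either the empty tree or a rooted ordered binary tree whose inner nodes are all labelled by the binary function $J$ (join, exactly two ordered children) and whose leaves are labelled by elements of $T$. The complexity $C(X)$ is the number of nodes of $X$ (0 for the empty tree). The leaf list $l$ of $X$ is the sequence of leaf labels in an inorder traversal. WORDER: build a list $S$ by scanning $l$ from front to rear and appending a literal only if neither it nor its complement is already in $S$; WORDER$(X)=\sum_{i:\,x_i\in S} w_i$. WMAJORITY: WMAJORITY$(X)=\sum w_i$ over all $i$ such that $x_i$ occurs in $l$ at least once and at least as often as $\bar x_i$. ORDER and MAJORITY are WORDER and WMAJORITY with all $w_i=1$. For $F$ one of these, MO-$F(X)=(F(X),C(X))$ (MO-ORDER, MO-MAJORITY, MO-WORDER, MO-WMAJORITY), where $F$ is to be maximized and $C$ minimized. Mutation (HVL-Prime applied $k$ times): each application chooses uniformly at random one of three operations. Substitute: replace a uniformly random leaf by a uniformly random $u\in T$. Insert: choose a uniformly random node $v$ and uniformly random $u\in T$, replace $v$ by a $J$-node with children $u$ and $v$ in uniformly random order (inserting into the empty tree yields the single leaf $u$). Delete: choose a uniformly random leaf $v$ with parent $p$ and sibling $u$,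 replace $p$ by $u$ (deleting $p$ and $v$; deleting the only leaf of a one-leaf tree yields the empty tree). Single-operation mutation uses $k=1$. (1+1) GP-single on MO-$F$: start with an initial tree $X$; in each iteration let $Y$ be $X$ mutated with $k=1$, and set $X:=Y$ iff $F(Y)>F(X)$, or $F(Y)=F(X)$ and $C(Y)\le C(X)$. Expected optimization time: expected number of iterations (fitness evaluations) until the current solution is for the first time optimal, i.e. has maximum possible $F$-value and, among such trees, minimum complexity. *)

From Stdlib Require Import Reals List Arith Bool ClassicalEpsilon.
Import ListNotations.
Open Scope R_scope.

(* Literal x_{i+1} is [Lit i true], its complement is [Lit i false] (0-based index). *)
Inductive lit : Type := Lit (i : nat) (pos : bool).
Definition lidx (l : lit) : nat := let (i, _) := l in i.
Definition lpos (l : lit) : bool := let (_, b) := l in b.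

Inductive ntree : Type := Leaf (l : lit) | J (a b : ntree).
(* A syntax tree is either empty (None) or a nonempty tree. *)
Definition tree : Type := option ntree.

Definition terminals (n : nat) : list lit :=
  flat_map (fun i => [Lit i true; Lit i false]) (seq 0 n).

Fixpoint nsize (t : ntree) : nat :=
  match t with Leaf _ => 1%nat | J a b => S (nsize a + nsize b) end.
Definition complexity (X : tree) : nat :=
  match X with None => 0%nat | Some t => nsize t end.

Fixpoint nleaves (t : ntree) : list lit :=
  match t with Leaf l => [l] | J a b => nleaves a ++ nleaves b end.
Definition leaf_list (X : tree) : list lit :=
  match X with None => [] | Some t => nleaves t end.

Definition valid (n : nat) (X : tree) : Prop :=
  forall l, In l (leaf_list X) -> In l (terminals n).

Fixpoint order_scan (S : list lit) (l : list lit) : list lit :=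
  match l with
  | [] => S
  | x :: r => if existsb (fun y => Nat.eqb (lidx y) (lidx x)) S
              then order_scan S r else order_scan (S ++ [x]) r
  end.

Definition worder (w : nat -> R) (X : tree) : R :=
  fold_right (fun l acc => (if lpos l then w (lidx l) else 0) + acc) 0
    (order_scan [] (leaf_list X)).

Definition count_lit (i : nat) (b : bool) (l : list lit) : nat :=
  length (filter (fun y => Nat.eqb (lidx y) i && Bool.eqb (lpos y) b) l).

Definition wmajority (w : nat -> R) (n : nat) (X : tree) : R :=
  fold_right (fun i acc =>
     (let cp := count_lit i true (leaf_list X) in
      let cn := count_lit i false (leaf_list X) in
      if Nat.leb 1 cp && Nat.leb cn cp then w i else 0) + acc) 0 (seq 0 n).

Definition ORDER (X : tree) : R := worder (fun _ => 1) X.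
Definition MAJORITY (n : nat) (X : tree) : R := wmajority (fun _ => 1) n X.

Definition nleafc (t : ntree) : nat := length (nleaves t).

(* replace the j-th leaf (inorder, 0-based) by u *)
Fixpoint subst_at (t : ntree) (j : nat) (u : lit) : ntree :=
  match t with
  | Leaf l => match j with O => Leaf u | _ => Leaf l end
  | J a b => if Nat.ltb j (nleafc a) then J (subst_at a j u) b
             else J a (subst_at b (j - nleafc a) u)
  end.

(* replace the k-th node (preorder, 0-based) v by J u v (b = true) or J v u (b = false) *)
Fixpoint ins_at (t : ntree) (k : nat) (u : lit) (b : bool) : ntree :=
  match k with
  | O => if b then J (Leaf u) t else J t (Leaf u)
  | S k' => match t with
            | Leaf l => Leaf l
            | J a c => if Nat.ltb k' (nsize a) then J (ins_at a k' u b) c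
                       else J a (ins_at c (k' - nsize a) u b)
            end
  end.

(* delete the j-th leaf (inorder): its parent is replaced by its sibling;
   None = the result is the empty tree (deleting the only leaf) *)
Fixpoint del_at (t : ntree) (j : nat) : option ntree :=
  match t with
  | Leaf _ => None
  | J a b => if Nat.ltb j (nleafc a)
             then match del_at a j with None => Some b | Some a' => Some (J a' b) end
             else match del_at b (j - nleafc a) with None => Some a | Some b' => Some (J a b') end
  end.

(* Distribution (finite list of (probability, outcome)) of one HVL-Prime
   application.  Each of the three operations has probability 1/3.
   On the empty tree, substitute and delete are not applicable and leave
   the tree unchanged; insert yields a single leaf u. *)
Definition mutate (n : nat) (X : tree) : list (R * tree) :=
  let Tn := terminals n in
  let m := INR (length Tn) in
  match X with
  | None =>
      [(1/3, None)]
      ++ map (fun u => (1/3 * / m, Some (Leaf u))) Tn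
      ++ [(1/3, None)]
  | Some t =>
      let L := INR (nleafc t) in
      let C := INR (nsize t) in
      flat_map (fun j => map (fun u => (1/3 * / L * / m, Some (subst_at t j u))) Tn)
               (seq 0 (nleafc t))
      ++ flat_map (fun k => flat_map (fun u =>
               [(1/3 * / C * / m * / 2, Some (ins_at t k u true));
                (1/3 * / C * / m * / 2, Some (ins_at t k u false))]) Tn)
               (seq 0 (nsize t))
      ++ map (fun j => (1/3 * / L, del_at t j)) (seq 0 (nleafc t))
  end.

Definition accept (F : tree -> R) (X Y : tree) : bool :=
  if Rlt_dec (F X) (F Y) then true
  else if Req_dec_T (F Y) (F X) then Nat.leb (complexity Y) (complexity X)
  else false.

Definition select (F : tree -> R) (X Y : tree) : tree :=
  if accept F X Y then Y else X.

Definition optimal (n : nat) (F : tree -> R) (X : tree) : Prop :=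
  valid n X /\
  (forall Y, valid n Y -> F Y <= F X) /\
  (forall Y, valid n Y -> F Y = F X -> (complexity X <= complexity Y)%nat).

Definition optb (n : nat) (F : tree -> R) (X : tree) : bool :=
  if excluded_middle_informative (optimal n F X) then true else false.

(* one iteration applied to a sub-distribution; runs that are already
   optimal are removed (stopped) *)
Definition step (n : nat) (F : tree -> R) (mu : list (R * tree)) : list (R * tree) :=
  flat_map (fun qX =>
     if optb n F (snd qX) then []
     else map (fun pY => (fst qX * fst pY, select F (snd qX) (snd pY)))
              (mutate n (snd qX))) mu.

(* law of X_t on the event that X_0, ..., X_{t-1} are all non-optimal *)
Fixpoint law (n : nat) (F : tree -> R) (X0 : tree) (t : nat) : list (R * tree) :=
  match t with
  | O => [(1, X0)]
  | S t' => step n F (law n F X0 t')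
  end.

(* P(tau > t) : probability that X_0, ..., X_t are all non-optimal *)
Definition surv (n : nat) (F : tree -> R) (X0 : tree) (t : nat) : R :=
  fold_right (fun qX acc => (if optb n F (snd qX) then 0 else fst qX) + acc) 0
    (law n F X0 t).

Definition partial_time (n : nat) (F : tree -> R) (X0 : tree) (N : nat) : R :=
  fold_right (fun t acc => surv n F X0 t + acc) 0 (seq 0 N).

(* E[tau] = sum_{t >= 0} P(tau > t) (possibly +infinity) is at least x *)
Definition expected_time_ge (n : nat) (F : tree -> R) (X0 : tree) (x : R) : Prop :=
  forall y, y < x -> exists N, y <= partial_time n F X0 N.

(** Proof idea: additive drift on a harmonic potential.  A variable [i < n]
  is _missing_ from a tree [X] if the positive literal x_i is not a leaf of
  [X]; let k(X) be the number of missing variables.  For ORDER and for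
  MAJORITY the fitness is at most n - k(X), and the value n is attained, so
  every optimal tree has k = 0.  The potential g(X) = 3 n H_{k(X)}, with H_k
  the k-th harmonic number, is therefore 0 on optimal trees and equals
  3 n H_n >= n ln n on the empty start tree.  Every offspring has its leaves
  among those of the parent plus at most one new literal u, and g drops only
  if u is the positive literal of a missing variable, by at most 3n/k; an
  average over the uniformly chosen literal shows that one iteration lowers
  g by at most 1 in expectation, whatever the selection does.  An additive
  drift argument on the stopped process [law] turns this into
  E[tau] >= g(empty tree) >= n ln n.
*)
From Stdlib Require Import Reals List Bool Lia Lra ClassicalEpsilon.
Import ListNotations.
Open Scope R_scope.

(** [sumR h l] is the sum of [h x] over the elements [x] of [l]; it is
    written as the same [fold_right] as the sums in the definitions. *)
Definition sumR {A} (h : A -> R) (l : list A) : R :=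
  fold_right (fun x acc => h x + acc) 0 l.

Lemma sumR_nil {A} (h : A -> R) : sumR h [] = 0.
Proof. reflexivity. Qed.

Lemma sumR_cons {A} (h : A -> R) x l : sumR h (x :: l) = h x + sumR h l.
Proof. reflexivity. Qed.

Lemma sumR_app {A} (h : A -> R) a b : sumR h (a ++ b) = sumR h a + sumR h b.
Proof. induction a; unfold sumR in *; simpl; [lra|]. rewrite IHa; lra. Qed.

Lemma sumR_map {A B} (h : B -> R) (k : A -> B) l :
  sumR h (map k l) = sumR (fun x => h (k x)) l.
Proof. induction l; unfold sumR in *; simpl; auto. rewrite IHl; auto. Qed.

Lemma sumR_flat_map {A B} (h : B -> R) (k : A -> list B) l :
  sumR h (flat_map k l) = sumR (fun x => sumR h (k x)) l.
Proof. induction l; simpl; auto. rewrite sumR_app. unfold sumR in *; simpl; rewrite IHl; auto. Qed.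

Lemma sumR_le {A} (f g : A -> R) l :
  (forall x, In x l -> f x <= g x) -> sumR f l <= sumR g l.
Proof.
  induction l as [|a l IH]; unfold sumR in *; simpl; intros H; [lra|].
  pose proof (H a (or_introl eq_refl)).
  pose proof (IH (fun x Hx => H x (or_intror Hx))). lra.
Qed.

Lemma sumR_ext {A} (f g : A -> R) l :
  (forall x, In x l -> f x = g x) -> sumR f l = sumR g l.
Proof. intros H; apply Rle_antisym; apply sumR_le; intros x Hx; rewrite H; auto; lra. Qed.

Lemma sumR_scal {A} (f : A -> R) c l : sumR (fun x => c * f x) l = c * sumR f l.
Proof. induction l; unfold sumR in *; simpl; [lra|]. rewrite IHl; lra. Qed.

Lemma sumR_minus {A} (f g : A -> R) l :
  sumR (fun x => f x - g x) l = sumR f l - sumR g l.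
Proof. induction l; unfold sumR in *; simpl; [lra|]. rewrite IHl; lra. Qed.

Lemma sumR_const {A} c (l : list A) : sumR (fun _ => c) l = INR (length l) * c.
Proof.
  induction l; unfold sumR in *; simpl length; [simpl; lra|].
  rewrite S_INR. simpl. rewrite IHl; lra.
Qed.

Lemma sumR_indicator {A} (p : A -> bool) c l :
  sumR (fun x => if p x then c else 0) l = INR (length (filter p l)) * c.
Proof.
  induction l; unfold sumR in *; simpl; [lra|].
  rewrite IHl. destruct (p a); simpl length; try rewrite S_INR; lra.
Qed.

Lemma sumR_nonneg {A} (f : A -> R) l : (forall x, In x l -> 0 <= f x) -> 0 <= sumR f l.
Proof.
  intros H. replace 0 with (sumR (fun _ : A => 0) l) by (rewrite sumR_const; lra).
  now apply sumR_le.
Qed.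

Lemma inv_nonneg x : 0 <= x -> 0 <= / x.
Proof.
  intros H. destruct (Req_dec x 0) as [->|E]; [rewrite Rinv_0; lra|].
  left; apply Rinv_0_lt_compat; lra.
Qed.

(** ** Missing variables, harmonic numbers and the potential *)

Definition pos_present (X : tree) (i : nat) : bool :=
  existsb (fun y => Nat.eqb (lidx y) i && lpos y) (leaf_list X).

Definition missing (n : nat) (X : tree) : nat :=
  length (filter (fun i => negb (pos_present X i)) (seq 0 n)).

Fixpoint harmonic (k : nat) : R :=
  match k with O => 0 | S k' => harmonic k' + / INR (S k') end.

Definition potential (n : nat) (X : tree) : R := 3 * INR n * harmonic (missing n X).

Definition fills_gap (n : nat) (X : tree) (u : lit) : bool :=
  Nat.ltb (lidx u) n && lpos u && negb (pos_present X (lidx u)).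

(** The largest possible drop of the potential when [u] is added to [X]. *)
Definition gain (n : nat) (X : tree) (u : lit) : R :=
  if fills_gap n X u then 3 * INR n * / INR (missing n X) else 0.

Lemma pos_present_iff X i : pos_present X i = true <-> In (Lit i true) (leaf_list X).
Proof.
  unfold pos_present. rewrite existsb_exists. split.
  - intros [[j b] [Hin Hb]]. simpl in Hb. apply andb_true_iff in Hb as [H1 H2].
    apply Nat.eqb_eq in H1. subst. auto.
  - intros H. exists (Lit i true). split; auto. simpl. now rewrite Nat.eqb_refl.
Qed.

Lemma missing_le n X : (missing n X <= n)%nat.
Proof.
  unfold missing. pose proof (filter_length (fun i => negb (pos_present X i)) (seq 0 n)).
  rewrite length_seq in H. lia.
Qed.

Lemma missing_empty n : missing n None = n.
Proof.
  unfold missing. rewrite (filter_ext_in _ (fun _ => true)) by reflexivity.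
  now rewrite filter_true, length_seq.
Qed.

Lemma present_plus_missing n X :
  INR n = INR (length (filter (pos_present X) (seq 0 n))) + INR (missing n X).
Proof. unfold missing. rewrite <- plus_INR, filter_length, length_seq. reflexivity. Qed.

Lemma harmonic_mono k k' : (k <= k')%nat -> harmonic k <= harmonic k'.
Proof.
  induction 1; [lra|]. cbn [harmonic].
  assert (0 < / INR (S m)) by (apply Rinv_0_lt_compat, lt_0_INR; lia). lra.
Qed.

(** H_k >= ln (k + 1), from ln (1 + x) <= x. *)
Lemma ln_le_harmonic k : ln (INR (S k)) <= harmonic k.
Proof.
  induction k as [|k IH]; [simpl; rewrite ln_1; lra|].
  cbn [harmonic]. assert (P : 0 < INR (S k)) by (apply lt_0_INR; lia).
  pose proof (Rinv_0_lt_compat _ P).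
  replace (INR (S (S k))) with (INR (S k) * (1 + / INR (S k)))
    by (rewrite (S_INR (S k)); field; lra).
  rewrite ln_mult by lra.
  assert (ln (1 + / INR (S k)) < / INR (S k)).
  { rewrite <- (ln_exp (/ INR (S k))) at 2. apply ln_increasing; [lra|].
    apply exp_ineq1. lra. }
  lra.
Qed.

Lemma missing_incl n X Y u : incl (leaf_list Y) (u :: leaf_list X) ->
  (missing n X <= missing n Y + (if fills_gap n X u then 1 else 0))%nat.
Proof.
  intros Hinc. unfold missing.
  set (MX := filter (fun i => negb (pos_present X i)) (seq 0 n)).
  set (MY := filter (fun i => negb (pos_present Y i)) (seq 0 n)).
  assert (Hcover : forall i, In i MX ->
            In i MY \/ (i = lidx u /\ fills_gap n X u = true)).
  { intros i Hi. apply filter_In in Hi as [Hi HX]. apply negb_true_iff in HX.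
    destruct (pos_present Y i) eqn:EY; [|left; apply filter_In; now rewrite EY].
    right. apply pos_present_iff, Hinc in EY as [Eu|EY].
    - subst u. apply in_seq in Hi. unfold fills_gap. simpl. rewrite HX.
      now replace (Nat.ltb i n) with true by (symmetry; apply Nat.ltb_lt; lia).
    - apply pos_present_iff in EY. congruence. }
  assert (HMX : NoDup MX) by apply NoDup_filter, seq_NoDup.
  destruct (fills_gap n X u).
  - rewrite Nat.add_1_r. change (S (length MY)) with (length (lidx u :: MY)).
    apply NoDup_incl_length; auto.
    intros i Hi. destruct (Hcover i Hi) as [H|[-> _]]; simpl; auto.
  - rewrite Nat.add_0_r. apply NoDup_incl_length; auto.
    intros i Hi. destruct (Hcover i Hi) as [H|[_ ?]]; [auto|discriminate].
Qed.

Lemma potential_incl n X Y u : incl (leaf_list Y) (u :: leaf_list X) ->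
  potential n X - potential n Y <= gain n X u.
Proof.
  intros Hinc. pose proof (missing_incl n X Y u Hinc) as K.
  pose proof (pos_INR n). unfold potential, gain.
  destruct (fills_gap n X u) eqn:E.
  - destruct (missing n X) as [|k] eqn:EK.
    + unfold fills_gap in E. apply andb_true_iff in E as [E1 E2].
      apply andb_true_iff in E1 as [E1 _]. apply Nat.ltb_lt in E1.
      assert (In (lidx u) (filter (fun i => negb (pos_present X i)) (seq 0 n)))
        by (apply filter_In; split; [apply in_seq; lia|auto]).
      unfold missing in EK. apply length_zero_iff_nil in EK. rewrite EK in H0.
      destruct H0.
    + cbn [harmonic]. assert (harmonic k <= harmonic (missing n Y))
        by (apply harmonic_mono; lia). nra.
  - assert (harmonic (missing n X) <= harmonic (missing n Y))
      by (apply harmonic_mono; lia). nra.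
Qed.

Lemma gain_nonneg n X u : 0 <= gain n X u.
Proof.
  unfold gain. destruct fills_gap; [|lra].
  apply Rmult_le_pos; [pose proof (pos_INR n); lra|apply inv_nonneg, pos_INR].
Qed.

Lemma gain_neg_lit n X i : gain n X (Lit i false) = 0.
Proof. unfold gain, fills_gap. simpl. now rewrite andb_false_r. Qed.

(** Summed over all terminals, the gains add up to at most 3n: each of the
    k missing variables contributes 3n/k. *)
Lemma gain_sum n X : sumR (gain n X) (terminals n) <= 3 * INR n.
Proof.
  unfold terminals. rewrite sumR_flat_map.
  rewrite (sumR_ext _ (fun i => if negb (pos_present X i)
                                 then 3 * INR n * / INR (missing n X) else 0)).
  - rewrite sumR_indicator. fold (missing n X). pose proof (pos_INR n).
    destruct (Req_dec (INR (missing n X)) 0) as [E|E]; [rewrite E; lra|].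
    field_simplify; lra.
  - intros i Hi. apply in_seq in Hi. unfold sumR; simpl.
    rewrite gain_neg_lit. unfold gain, fills_gap; simpl.
    replace (Nat.ltb i n) with true by (symmetry; apply Nat.ltb_lt; lia). simpl. lra.
Qed.

(** ** One mutation: leaf inclusions, total mass and drift *)

Lemma subst_incl t j u : incl (nleaves (subst_at t j u)) (u :: nleaves t).
Proof.
  revert j; induction t as [l|a IHa b IHb]; intros j x Hx; simpl in *.
  - destruct j; simpl in Hx; tauto.
  - destruct (Nat.ltb j (nleafc a)); simpl in Hx; rewrite in_app_iff in *.
    + destruct Hx as [Hx|Hx]; [apply IHa in Hx; simpl in Hx|]; tauto.
    + destruct Hx as [Hx|Hx]; [|apply IHb in Hx; simpl in Hx]; tauto.
Qed.

Lemma ins_incl t k u b : incl (nleaves (ins_at t k u b)) (u :: nleaves t).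
Proof.
  revert k; induction t as [l|a IHa c IHc]; intros k x Hx; destruct k; simpl in *.
  - destruct b; simpl in Hx; rewrite ?in_app_iff in Hx; simpl in Hx; tauto.
  - tauto.
  - destruct b; simpl in Hx; rewrite ?in_app_iff in *; simpl in *; tauto.
  - destruct (Nat.ltb k (nsize a)); simpl in Hx; rewrite in_app_iff in *.
    + destruct Hx as [Hx|Hx]; [apply IHa in Hx; simpl in Hx|]; tauto.
    + destruct Hx as [Hx|Hx]; [|apply IHc in Hx; simpl in Hx]; tauto.
Qed.

Lemma del_incl t j : incl (leaf_list (del_at t j)) (nleaves t).
Proof.
  revert j; induction t as [l|a IHa b IHb]; intros j x Hx; simpl in *; [contradiction|].
  rewrite in_app_iff. destruct (Nat.ltb j (nleafc a)).
  - specialize (IHa j). destruct (del_at a j); simpl in *;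
      [rewrite in_app_iff in Hx|]; firstorder.
  - specialize (IHb (j - nleafc a)%nat). destruct (del_at b (j - nleafc a)); simpl in *;
      [rewrite in_app_iff in Hx|]; firstorder.
Qed.

Lemma nleafc_pos t : (1 <= nleafc t)%nat.
Proof. unfold nleafc; induction t; simpl; auto. rewrite length_app; lia. Qed.

Lemma nsize_pos t : (1 <= nsize t)%nat.
Proof. destruct t; simpl; lia. Qed.

Lemma terminals_length n : length (terminals n) = (2 * n)%nat.
Proof.
  unfold terminals. induction n; [reflexivity|].
  rewrite seq_S, flat_map_app, length_app, IHn. simpl. lia.
Qed.

Lemma mutate_nonneg n X e : In e (mutate n X) -> 0 <= fst e.
Proof.
  intros H. pose proof (inv_nonneg _ (pos_INR (length (terminals n)))).
  destruct X as [t|]; simpl in H.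
  - pose proof (inv_nonneg _ (pos_INR (nleafc t))).
    pose proof (inv_nonneg _ (pos_INR (nsize t))).
    rewrite !in_app_iff in H. destruct H as [H|[H|H]].
    + apply in_flat_map in H as [j [_ H]]. apply in_map_iff in H as [u [<- _]].
      simpl. repeat apply Rmult_le_pos; lra.
    + apply in_flat_map in H as [j [_ H]]. apply in_flat_map in H as [u [_ H]].
      destruct H as [<-|[<-|[]]]; simpl; repeat apply Rmult_le_pos; lra.
    + apply in_map_iff in H as [u [<- _]]. simpl. repeat apply Rmult_le_pos; lra.
  - destruct H as [<-|H]; simpl; [lra|]. rewrite in_app_iff in H.
    destruct H as [H|[<-|[]]]; simpl; [|lra].
    apply in_map_iff in H as [u [<- _]]; simpl. apply Rmult_le_pos; lra.
Qed.

Lemma block_bound {A} (K : nat) (w : R) (f : nat -> A -> R) (d : A -> R) (l : list A) :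
  (1 <= K)%nat -> 0 <= w -> (forall j u, In u l -> f j u <= d u) ->
  sumR (fun j => sumR (fun u => w * / INR K * f j u) l) (seq 0 K) <= w * sumR d l.
Proof.
  intros HK Hw Hf. assert (PK : 0 < INR K) by (apply lt_0_INR; lia).
  eapply Rle_trans with (sumR (fun _ => w * / INR K * sumR d l) (seq 0 K)).
  - apply sumR_le. intros j _. rewrite <- sumR_scal. apply sumR_le. intros u Hu.
    apply Rmult_le_compat_l; [apply Rmult_le_pos; [lra|apply inv_nonneg; lra]|auto].
  - rewrite sumR_const, length_seq. right. field. lra.
Qed.

Lemma mutate_mass n X : (1 <= n)%nat -> sumR fst (mutate n X) = 1.
Proof.
  intros Hn. assert (Pn : 1 <= INR n) by (apply (le_INR 1); auto).
  set (m := INR (length (terminals n))).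
  assert (Hm : m = 2 * INR n)
    by (unfold m; rewrite terminals_length, mult_INR; simpl; lra).
  destruct X as [t|]; simpl mutate; fold m.
  - assert (PL : 1 <= INR (nleafc t)) by (apply (le_INR 1), nleafc_pos).
    assert (PC : 1 <= INR (nsize t)) by (apply (le_INR 1), nsize_pos).
    rewrite !sumR_app, !sumR_flat_map, sumR_map.
    rewrite (sumR_ext _ (fun _ => m * (1/3 * / INR (nleafc t) * / m))).
    2:{ intros j _. rewrite sumR_map. simpl fst. apply sumR_const. }
    rewrite (sumR_ext (fun x => sumR fst (flat_map _ _)) (fun _ => m * (1/3 * / INR (nsize t) * / m))).
    2:{ intros j _. unfold m. rewrite sumR_flat_map, <- sumR_const. apply sumR_ext.
        intros u _. cbn. lra. }
    simpl fst. rewrite !sumR_const, !length_seq. rewrite Hm. field. lra.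
  - rewrite sumR_cons, sumR_app, sumR_map, sumR_cons. simpl fst.
    unfold m. rewrite sumR_const. fold m. unfold sumR; simpl. rewrite Hm. field. lra.
Qed.

(** Expected value of [h] after one mutation of [X], when [h] is at most
    [d u] on trees whose leaves are those of [X] plus [u], and at most 0 on
    trees whose leaves are among those of [X]: substitution and insertion
    each contribute at most a third of the average of [d] over the
    terminals, deletion (and the no-op cases on the empty tree) nothing. *)
Lemma mutate_expect_le n X (h : tree -> R) (d : lit -> R) :
  (forall u, 0 <= d u) ->
  (forall u Y, incl (leaf_list Y) (u :: leaf_list X) -> h Y <= d u) ->
  (forall Y, incl (leaf_list Y) (leaf_list X) -> h Y <= 0) ->
  sumR (fun e => fst e * h (snd e)) (mutate n X)
    <= 2/3 * / INR (length (terminals n)) * sumR d (terminals n).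
Proof.
  intros Hd Hext Hsub.
  set (m := INR (length (terminals n))).
  assert (Hmi : 0 <= / m) by apply inv_nonneg, pos_INR.
  assert (HS : 0 <= sumR d (terminals n)) by (apply sumR_nonneg; auto).
  destruct X as [t|]; simpl mutate; fold m.
  - rewrite !sumR_app, !sumR_flat_map, sumR_map.
    apply Rle_trans with (1/3 * / m * sumR d (terminals n)
                          + (1/3 * / m * sumR d (terminals n) + 0)); [|lra].
    apply Rplus_le_compat; [|apply Rplus_le_compat].
    +
      eapply Rle_trans;
        [|apply (block_bound (nleafc t) _ (fun j u => h (Some (subst_at t j u))))].
      * right. apply sumR_ext; intros j _. rewrite sumR_map.
        apply sumR_ext; intros u _. simpl. ring.
      * apply nleafc_pos.
      * apply Rmult_le_pos; lra.
      * intros j u _. apply Hext, subst_incl.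
    +
      eapply Rle_trans; [|apply (block_bound (nsize t) _ (fun k u =>
          (h (Some (ins_at t k u true)) + h (Some (ins_at t k u false))) / 2))].
      * right. apply sumR_ext; intros k _. rewrite sumR_flat_map.
        apply sumR_ext; intros u _. cbn. unfold Rdiv. ring.
      * apply nsize_pos.
      * apply Rmult_le_pos; lra.
      * intros k u _. pose proof (Hext u (Some (ins_at t k u true)) (ins_incl t k u true)).
        pose proof (Hext u (Some (ins_at t k u false)) (ins_incl t k u false)). lra.
    +
      apply Rle_trans with (sumR (fun _ => 0) (seq 0 (nleafc t)));
        [|rewrite sumR_const; lra].
      apply sumR_le; intros j _. simpl.
      pose proof (Hsub _ (del_incl t j)).
      assert (0 <= 1/3 * / INR (nleafc t)) by (apply Rmult_le_pos; [lra|apply inv_nonneg, pos_INR]).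
      nra.
  - rewrite sumR_cons, sumR_app, sumR_map, sumR_cons, sumR_nil. simpl fst; simpl snd.
    assert (Hnone : h None <= 0) by (apply Hsub; intros x []).
    assert (Hleaf : sumR (fun u => 1/3 * / m * h (Some (Leaf u))) (terminals n)
                    <= 1/3 * / m * sumR d (terminals n)).
    { rewrite <- sumR_scal. apply sumR_le; intros u _.
      apply Rmult_le_compat_l; [apply Rmult_le_pos; lra|].
      apply Hext. intros x [<-|[]]; left; auto. }
    assert (0 <= 1/3 * / m * sumR d (terminals n)) by (repeat apply Rmult_le_pos; lra).
    lra.
Qed.

Lemma potential_drift n (F : tree -> R) X : (1 <= n)%nat ->
  sumR (fun e => fst e * potential n (select F X (snd e))) (mutate n X)
    >= potential n X - 1.
Proof.
  intros Hn.
  assert (Hbound := mutate_expect_le n X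
            (fun Y => potential n X - potential n (select F X Y)) (gain n X)
            (gain_nonneg n X)).
  assert (Hext : forall u Y, incl (leaf_list Y) (u :: leaf_list X) ->
            potential n X - potential n (select F X Y) <= gain n X u).
  { intros u Y HY. unfold select. destruct (accept F X Y).
    - now apply potential_incl.
    - pose proof (gain_nonneg n X u). lra. }
  assert (Hsub : forall Y, incl (leaf_list Y) (leaf_list X) ->
            potential n X - potential n (select F X Y) <= 0).
  { intros Y HY. rewrite <- (gain_neg_lit n X 0). apply Hext.
    intros x Hx; right; auto. }
  specialize (Hbound Hext Hsub).
  rewrite (sumR_ext _ (fun e => potential n X * fst e
                                - fst e * potential n (select F X (snd e))))
    in Hbound by (intros; simpl; ring).
  rewrite sumR_minus, sumR_scal, mutate_mass in Hbound by auto.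
  pose proof (gain_sum n X).
  rewrite terminals_length in Hbound.
  assert (Pn : 1 <= INR n) by (apply (le_INR 1); auto).
  assert (2/3 * / INR (2 * n) * sumR (gain n X) (terminals n) <= 1).
  { rewrite mult_INR. simpl (INR 2).
    apply Rle_trans with (2/3 * / (2 * INR n) * (3 * INR n)); [|right; field; lra].
    apply Rmult_le_compat_l; auto. apply Rmult_le_pos; [lra|apply inv_nonneg; lra]. }
  lra.
Qed.

(** ** Additive drift: a lower bound on the expected optimization time

  Let [g] be a potential that is at most 0 on optimal trees, at most its
  initial value [g X0] everywhere, and that decreases by at most 1 in
  expectation in one iteration from any non-optimal tree.  Along the stopped
  process [law], the expected potential then drops by at most the survival
  probability in each step, so [partial_time N >= g X0 * (1 - surv N)];
  together with [partial_time N >= N * surv N] this forces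
  [E[tau] >= g X0]. *)
Section AdditiveDrift.
Variables (n : nat) (F : tree -> R) (X0 : tree) (g : tree -> R).
Hypothesis n_pos : (1 <= n)%nat.
Hypothesis g_optimal : forall X, optb n F X = true -> g X <= 0.
Hypothesis g_max : forall X, g X <= g X0.
Hypothesis g_drift : forall X, optb n F X = false ->
  sumR (fun e => fst e * g (select F X (snd e))) (mutate n X) >= g X - 1.

Definition expected_g (mu : list (R * tree)) : R := sumR (fun e => fst e * g (snd e)) mu.
Definition survival (mu : list (R * tree)) : R :=
  sumR (fun e => if optb n F (snd e) then 0 else fst e) mu.

Definition nonneg_weights (mu : list (R * tree)) : Prop := forall e, In e mu -> 0 <= fst e.

Lemma step_nonneg mu : nonneg_weights mu -> nonneg_weights (step n F mu).
Proof.
  intros H e He. unfold step in He. apply in_flat_map in He as [[q X] [Hq He]].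
  simpl in He. destruct (optb n F X); [destruct He|].
  apply in_map_iff in He as [pY [<- Hp]]. simpl.
  apply Rmult_le_pos; [apply (H _ Hq)|apply (mutate_nonneg n X pY Hp)].
Qed.

Lemma law_nonneg t : nonneg_weights (law n F X0 t).
Proof. induction t; simpl; [intros e [<-|[]]; simpl; lra|now apply step_nonneg]. Qed.

Lemma step_expected_g mu : nonneg_weights mu ->
  expected_g (step n F mu) >= expected_g mu - survival mu.
Proof.
  intros Hnn. unfold expected_g, survival, step.
  rewrite sumR_flat_map, <- sumR_minus. apply Rle_ge, sumR_le.
  intros [q X] Hin. pose proof (Hnn _ Hin) as Hq. simpl in *.
  destruct (optb n F X) eqn:E.
  - pose proof (g_optimal X E). rewrite sumR_nil. nra.
  - rewrite sumR_map. simpl.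
    rewrite (sumR_ext _ (fun pY => q * (fst pY * g (select F X (snd pY)))))
      by (intros; ring).
    rewrite sumR_scal. pose proof (g_drift X E). nra.
Qed.

Lemma step_survival mu : nonneg_weights mu -> survival (step n F mu) <= survival mu.
Proof.
  intros Hnn. apply Rle_trans with (sumR fst (step n F mu)).
  { apply sumR_le. intros e He. destruct optb; [apply (step_nonneg mu Hnn e He)|lra]. }
  unfold step, survival. rewrite sumR_flat_map. apply sumR_le.
  intros [q X] Hin. simpl. destruct (optb n F X); [rewrite sumR_nil; lra|].
  rewrite sumR_map. simpl. rewrite sumR_scal, mutate_mass by auto. lra.
Qed.

(** Only surviving (non-optimal) trees carry positive potential. *)
Lemma expected_g_le mu : nonneg_weights mu -> expected_g mu <= g X0 * survival mu.
Proof.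
  intros Hnn. unfold expected_g, survival. rewrite <- sumR_scal. apply sumR_le.
  intros [q X] Hin. pose proof (Hnn _ Hin). simpl in *.
  destruct (optb n F X) eqn:E.
  - pose proof (g_optimal X E). nra.
  - pose proof (g_max X). nra.
Qed.

Lemma surv_law t : surv n F X0 t = survival (law n F X0 t).
Proof. reflexivity. Qed.

Lemma surv_nonneg t : 0 <= surv n F X0 t.
Proof.
  rewrite surv_law. apply sumR_nonneg. intros e He.
  destruct optb; [lra|exact (law_nonneg t e He)].
Qed.

Lemma surv_decreasing t : surv n F X0 (S t) <= surv n F X0 t.
Proof. rewrite !surv_law. apply step_survival, law_nonneg. Qed.

Lemma partial_time_S N :
  partial_time n F X0 (S N) = partial_time n F X0 N + surv n F X0 N.
Proof.
  unfold partial_time. rewrite seq_S, fold_right_app. simpl.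
  generalize (surv n F X0 N). induction (seq 0 N); intros s; simpl; [lra|].
  rewrite IHl; lra.
Qed.

(** Telescoping the drift: the potential lost so far is paid for by the
    survival probabilities. *)
Lemma expected_g_law N :
  expected_g (law n F X0 N) >= g X0 - partial_time n F X0 N.
Proof.
  induction N as [|N IH].
  - unfold expected_g, partial_time. simpl. lra.
  - rewrite partial_time_S. simpl law.
    pose proof (step_expected_g _ (law_nonneg N)). rewrite <- surv_law in H. lra.
Qed.

Lemma partial_time_ge_survival N : partial_time n F X0 N >= INR N * surv n F X0 N.
Proof.
  induction N as [|N IH]; [unfold partial_time; simpl; lra|].
  rewrite partial_time_S, S_INR. pose proof (surv_decreasing N).
  pose proof (surv_nonneg (S N)). pose proof (pos_INR N). nra.
Qed.

Lemma partial_time_ge_potential N :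
  partial_time n F X0 N >= g X0 * (1 - surv n F X0 N).
Proof.
  pose proof (expected_g_law N). pose proof (expected_g_le _ (law_nonneg N)).
  rewrite <- surv_law in H0. lra.
Qed.

Theorem drift_lower_bound x : x <= g X0 -> expected_time_ge n F X0 x.
Proof.
  intros Hx y Hy. destruct (Rle_dec y 0) as [Hy0|Hy0].
  { exists 0%nat. unfold partial_time. simpl. lra. }
  set (G := g X0) in *.
  destruct (INR_unbounded (y * G / (G - y))) as [N HN]. exists N.
  assert (HNG : INR N * (G - y) > y * G).
  { apply (Rmult_lt_compat_r (G - y)) in HN; [|lra]. field_simplify in HN; lra. }
  pose proof (partial_time_ge_survival N). pose proof (partial_time_ge_potential N).
  fold G in H0. set (T := partial_time n F X0 N) in *. set (s := surv n F X0 N) in *.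
  pose proof (pos_INR N).
  (* G * (T >= N s) + N * (T >= G (1 - s)) gives T (N + G) >= N G > y (N + G). *)
  assert (T * (INR N + G) >= INR N * G) by nra.
  nra.
Qed.

End AdditiveDrift.

(** ** Fitness bounds: optimal trees miss no variable *)

Lemma terminals_lidx n x : In x (terminals n) -> (lidx x < n)%nat.
Proof.
  unfold terminals. intros H. apply in_flat_map in H as [i [Hi H]]. apply in_seq in Hi.
  destruct H as [<-|[<-|[]]]; simpl; lia.
Qed.

Lemma NoDup_map_filter {A B} (f : A -> B) (p : A -> bool) l :
  NoDup (map f l) -> NoDup (map f (filter p l)).
Proof.
  induction l as [|a l IH]; simpl; intros H; auto. inversion H as [|? ? Ha Hl]; subst.
  destruct (p a); simpl; auto. constructor; auto.
  intros Hi. apply Ha. apply in_map_iff in Hi as [y [Hy Hy2]].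
  apply filter_In in Hy2 as [Hy2 _]. apply in_map_iff. eauto.
Qed.

Lemma order_scan_spec L : forall S, exists S',
  order_scan S L = S ++ S' /\ (forall x, In x S' -> In x L) /\
  (NoDup (map lidx S) -> NoDup (map lidx (S ++ S'))).
Proof.
  induction L as [|x r IH]; intros S; simpl.
  - exists []. rewrite app_nil_r. auto.
  - destruct (existsb (fun y => Nat.eqb (lidx y) (lidx x)) S) eqn:E.
    + destruct (IH S) as [S' [H1 [H2 H3]]]. exists S'. auto.
    + destruct (IH (S ++ [x])) as [S' [H1 [H2 H3]]]. exists (x :: S').
      rewrite H1, <- app_assoc. split; [reflexivity|split; [intros y [<-|Hy]; auto|]].
      intros Hn. replace (S ++ x :: S') with ((S ++ [x]) ++ S')
        by (rewrite <- app_assoc; reflexivity). apply H3. rewrite map_app.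
      apply NoDup_app; [auto|repeat constructor; intros []|].
      intros i Hi [Ex|[]]. apply in_map_iff in Hi as [y [Ey Hy]].
      assert (existsb (fun y => Nat.eqb (lidx y) (lidx x)) S = true)
        by (apply existsb_exists; exists y; split; auto; apply Nat.eqb_eq; congruence).
      congruence.
Qed.

(** ORDER counts positive literals with pairwise distinct variables, all
    present in the tree; hence it is at most the number of present
    variables. *)
Lemma ORDER_bound n X : valid n X -> ORDER X + INR (missing n X) <= INR n.
Proof.
  intros Hv. rewrite (present_plus_missing n X).
  apply Rplus_le_compat_r.
  destruct (order_scan_spec (leaf_list X) []) as [S' [H1 [H2 H3]]]. simpl in H1.
  unfold ORDER, worder. rewrite H1.
  change (fold_right _ 0 S') with (sumR (fun l => if lpos l then 1 else 0) S').
  rewrite sumR_indicator, Rmult_1_r. apply le_INR.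
  rewrite <- (length_map lidx). apply NoDup_incl_length.
  - apply NoDup_map_filter, H3. constructor.
  - intros y Hy. apply in_map_iff in Hy as [x [<- Hx]].
    apply filter_In in Hx as [Hx Hp]. pose proof (H2 x Hx) as HL. apply filter_In. split.
    + apply in_seq. pose proof (terminals_lidx n x (Hv x HL)). lia.
    + apply pos_present_iff. destruct x as [i b]; simpl in *; subst; auto.
Qed.

(** MAJORITY scores a variable only if its positive literal occurs. *)
Lemma MAJORITY_bound n X : MAJORITY n X + INR (missing n X) <= INR n.
Proof.
  rewrite (present_plus_missing n X).
  apply Rplus_le_compat_r.
  rewrite <- (Rmult_1_r (INR _)), <- sumR_indicator. apply sumR_le. intros i _. cbv zeta.
  destruct (Nat.leb 1 (count_lit i true (leaf_list X)) && _) eqn:E;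
    [|destruct pos_present; lra].
  apply andb_true_iff in E as [E _]. apply Nat.leb_le in E. unfold count_lit in E.
  destruct (filter _ (leaf_list X)) as [|y l] eqn:Ef; simpl in E; [lia|].
  assert (Hy : In y (filter (fun y => Nat.eqb (lidx y) i && Bool.eqb (lpos y) true)
                            (leaf_list X))) by (rewrite Ef; left; auto).
  apply filter_In in Hy as [Hy Hp]. destruct y as [j [|]]; simpl in Hp;
    [|now rewrite andb_false_r in Hp].
  apply andb_true_iff in Hp as [Hp _]. apply Nat.eqb_eq in Hp. subst j.
  apply pos_present_iff in Hy. rewrite Hy. lra.
Qed.

Fixpoint comb (l : list lit) : tree :=
  match l with
  | [] => None
  | x :: r => match comb r with None => Some (Leaf x) | Some t => Some (J (Leaf x) t) end
  end.

Lemma comb_leaves l : leaf_list (comb l) = l.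
Proof.
  induction l as [|x r IH]; simpl; auto.
  destruct (comb r); simpl in *; now rewrite ?IH, <- ?IH.
Qed.

(** The tree x_1 x_2 ... x_n reaches fitness n for both functions. *)
Definition all_positive (n : nat) : tree := comb (map (fun i => Lit i true) (seq 0 n)).

Lemma all_positive_valid n : valid n (all_positive n).
Proof.
  intros l Hl. unfold all_positive in Hl. rewrite comb_leaves in Hl.
  apply in_map_iff in Hl as [i [<- Hi]].
  unfold terminals. apply in_flat_map. exists i. split; [auto|left; auto].
Qed.

Lemma order_scan_fresh m : forall a S, (forall y, In y S -> (lidx y < a)%nat) ->
  order_scan S (map (fun i => Lit i true) (seq a m)) = S ++ map (fun i => Lit i true) (seq a m).
Proof.
  induction m as [|m IH]; intros a S H; simpl; [now rewrite app_nil_r|].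
  destruct (existsb (fun y => Nat.eqb (lidx y) a) S) eqn:E.
  - apply existsb_exists in E as [y [Hy E]]. apply Nat.eqb_eq in E.
    specialize (H y Hy). lia.
  - rewrite IH, <- app_assoc; auto. intros y Hy.
    apply in_app_or in Hy as [Hy|[<-|[]]]; [specialize (H y Hy)|simpl]; lia.
Qed.

Lemma ORDER_all_positive n : INR n <= ORDER (all_positive n).
Proof.
  unfold ORDER, worder, all_positive. rewrite comb_leaves, order_scan_fresh by (intros _ []).
  simpl app.
  change (fold_right _ 0 ?s) with (sumR (fun l => if lpos l then 1 else 0) s).
  rewrite sumR_map. cbn [lpos]. rewrite sumR_const, length_seq. lra.
Qed.

Lemma MAJORITY_all_positive n : INR n <= MAJORITY n (all_positive n).
Proof.
  unfold MAJORITY, wmajority, all_positive. rewrite comb_leaves.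
  change (fold_right _ 0 ?s) with (sumR (fun i => (let cp := count_lit i true
      (map (fun i => Lit i true) (seq 0 n)) in let cn := count_lit i false
      (map (fun i => Lit i true) (seq 0 n)) in
      if Nat.leb 1 cp && Nat.leb cn cp then 1 else 0)) s).
  rewrite (sumR_ext _ (fun _ => 1)), sumR_const, length_seq; [lra|].
  intros i Hi. cbv zeta.
  assert (Hneg : count_lit i false (map (fun i => Lit i true) (seq 0 n)) = 0%nat).
  { unfold count_lit. rewrite filter_map_swap. simpl.
    now rewrite (filter_ext _ (fun _ => false)), filter_false
      by (intros; apply andb_false_r). }
  assert (Hpos : (1 <= count_lit i true (map (fun i => Lit i true) (seq 0 n)))%nat).
  { unfold count_lit. destruct (filter _ _) eqn:Ef; simpl; [|lia].
    assert (Hin : In (Lit i true) (filter (fun y => Nat.eqb (lidx y) i && Bool.eqb (lpos y) true)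
                               (map (fun i => Lit i true) (seq 0 n))))
      by (apply filter_In; split;
          [apply (in_map (fun j => Lit j true)); auto|simpl; now rewrite Nat.eqb_refl]).
    rewrite Ef in Hin; destruct Hin. }
  rewrite Hneg. apply Nat.leb_le in Hpos. now rewrite Hpos.
Qed.

Lemma optimal_no_missing n (F : tree -> R) :
  (exists Y, valid n Y /\ INR n <= F Y) ->
  (forall X, valid n X -> F X + INR (missing n X) <= INR n) ->
  forall X, optb n F X = true -> missing n X = 0%nat.
Proof.
  intros [Y [HY HFY]] Hbound X Hopt. unfold optb in Hopt.
  destruct (excluded_middle_informative (optimal n F X)) as [[Hv [Hmax _]]|];
    [|discriminate].
  pose proof (Hmax Y HY). pose proof (Hbound X Hv). pose proof (pos_INR (missing n X)).
  apply INR_eq. simpl. lra.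
Qed.

Lemma time_lower_bound n (F : tree -> R) : (1 <= n)%nat ->
  (forall X, optb n F X = true -> missing n X = 0%nat) ->
  expected_time_ge n F None (INR n * ln (INR n)).
Proof.
  intros Hn Hopt. pose proof (pos_INR n).
  apply (drift_lower_bound n F None (potential n)); auto.
  - intros X HX. unfold potential. rewrite (Hopt X HX). simpl. lra.
  - intros X. unfold potential. rewrite missing_empty.
    pose proof (harmonic_mono _ _ (missing_le n X)). nra.
  - intros X _. now apply potential_drift.
  - unfold potential. rewrite missing_empty.
    assert (ln (INR n) <= harmonic n).
    { eapply Rle_trans; [|apply ln_le_harmonic]. rewrite S_INR.
      left. apply ln_increasing; [apply lt_0_INR; lia|lra]. }
    pose proof (harmonic_mono 0 n (Nat.le_0_l n)). simpl harmonic in *. nra.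
Qed.

Theorem theorem1 :
  (exists c, 0 < c /\ exists n0 : nat, forall n : nat, (1 <= n)%nat -> (n0 <= n)%nat ->
     expected_time_ge n ORDER None (c * INR n * ln (INR n))) /\
  (exists c, 0 < c /\ exists n0 : nat, forall n : nat, (1 <= n)%nat -> (n0 <= n)%nat ->
     expected_time_ge n (MAJORITY n) None (c * INR n * ln (INR n))).
Proof.
  split; exists 1; split; try lra; exists 0%nat; intros n Hn _;
    rewrite Rmult_1_l; apply time_lower_bound; auto; apply optimal_no_missing.
  - exists (all_positive n). split; [apply all_positive_valid|apply ORDER_all_positive].
  - apply ORDER_bound.
  - exists (all_positive n). split; [apply all_positive_valid|apply MAJORITY_all_positive].
  - intros X _. apply MAJORITY_bound.
Qed.
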